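(* For every finite tree $T$, the dominating ideal $DI(T)$ is normally torsion-free.
   Context: For a simple graph $G$, $N_G[i]=\{j:\{i,j\}\in E(G)\}\cup\{i\}$. A set $S\subseteq V(G)$ is a dominating set if $S\cap N_G[v]\ne\emptyset$ for all $v\in V(G)$; it is minimal if it contains no other dominating set properly. With a variable $x_j$ per vertex in a polynomial ring over a field $K$, $DI(G)=(\prod_{i\in S}x_i : S \text{ a minimal dominating set of } G)$. An ideal $I$ is normally torsion-free if $\mathrm{Ass}(R/I^k)\subseteq\mathrm{Ass}(R/I)$ for all $k\ge1$. *)

From HB Require Import structures.
From mathcomp Require Import all_boot all_order all_algebra.
From mathcomp Require Import mpoly.
Set Implicit Arguments. Unset Strict Implicit. Unset Printing Implicit Defensive.
Import GRing.Theory.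
Local Open Scope ring_scope.

Definition simple_graph (n : nat) (e : rel 'I_n) : Prop :=
  (forall x y, e x y = e y x) /\ (forall x, e x x = false).

Definition acyclic (n : nat) (e : rel 'I_n) : Prop :=
  ~ (exists s : seq 'I_n, [/\ (3 <= size s)%N, uniq s & cycle e s]).

Definition connected (n : nat) (e : rel 'I_n) : Prop :=
  forall x y : 'I_n, connect e x y.

Definition is_tree (n : nat) (e : rel 'I_n) : Prop :=
  [/\ simple_graph e, connected e & acyclic e].

Definition dominating (n : nat) (e : rel 'I_n) (S : {set 'I_n}) : bool :=
  [forall v, [exists u in S, (u == v) || e v u]].

Definition minimal_dominating (n : nat) (e : rel 'I_n) (S : {set 'I_n}) : bool :=
  minset (dominating e) S.

Section Ideals.
Variable R : comRingType.

Definition ideal_gen (G : R -> Prop) (f : R) : Prop :=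
  exists gs cs : seq R, (forall g, g \in gs -> G g) /\
    f = \sum_(i < size gs) cs`_i * gs`_i.

Definition ideal_pow (I : R -> Prop) (k : nat) : R -> Prop :=
  ideal_gen (fun g => exists gs : seq R,
     [/\ size gs = k, (forall x, x \in gs -> I x) & g = \prod_(x <- gs) x]).

Definition is_ideal (P : R -> Prop) : Prop :=
  [/\ P 0, (forall a b, P a -> P b -> P (a + b)) & (forall r a, P a -> P (r * a))].

Definition prime_ideal (P : R -> Prop) : Prop :=
  [/\ is_ideal P, ~ P 1 & forall a b, P (a * b) -> P a \/ P b].

(* P \in Ass(R/J): P is prime and P = (J : f) for some f in R. *)
Definition associated_prime (J P : R -> Prop) : Prop :=
  prime_ideal P /\ exists f : R, forall g, P g <-> J (g * f).

Definition normally_torsion_free (I : R -> Prop) : Prop :=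
  forall k : nat, (1 <= k)%N ->
    forall P, associated_prime (ideal_pow I k) P -> associated_prime I P.
End Ideals.

Definition dominating_ideal (K : fieldType) (n : nat) (e : rel 'I_n)
  : {mpoly K[n]} -> Prop :=
  ideal_gen (fun g => exists2 S : {set 'I_n}, minimal_dominating e S &
                        g = \prod_(i in S) 'X_i).

From mathcomp Require Import all_boot all_order all_algebra.
From mathcomp Require Import mpoly.
From mathcomp Require Import zify ring.
From Stdlib Require Import Classical.
Set Implicit Arguments. Unset Strict Implicit. Unset Printing Implicit Defensive.
Import GRing.Theory.

(* For a vertex v let P_v be the monomial prime generated by the variables x_j,
   j in the closed neighbourhood N[v].  A polynomial lies in P_v^k iff each of
   its monomials has degree at least k in these variables (adeg_ge).  The proof:
   - Valuation: over a domain the A-order of polynomials is additive, so each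
     P_A is prime and the colon (P_A^k : f) is P_A whenever f is not in P_A^k.
   - Powers: for any graph DI^k lies in the symbolic power  /\_v P_v^k, since
     minimal dominating sets meet every N[v].  On a forest the converse holds:
     a monomial of N[v]-degree >= k for all v splits into k dominating sets.
     This is a colouring lemma proved by removing a vertex with at most one
     neighbour, which exists in every nonempty vertex set of a forest.
   - Associated primes: if P = (DI^k : f) is prime, P contains the variables of
     some N[v0] with f not in P_v0^k; taking N[v] inclusion-minimal inside N[v0]
     gives P = P_v, and P_v = (DI : product of the variables outside N[v]). *)

Lemma walk_path (T : Type) (e : rel T) (w : nat -> T) :
  (forall i, e (w i) (w i.+1)) -> forall m i, path e (w i) (map w (iota i.+1 m)).
Proof. by move=> we; elim=> [|m IH] i //=; rewrite we IH. Qed.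

(* An infinite non-backtracking walk in a finite loopless graph closes a cycle:
   the segment between the first repetition and its earlier occurrence. *)
Lemma nonbacktracking_walk_cycle (T : finType) (e : rel T) (w : nat -> T) :
  (forall x, e x x = false) -> (forall i, e (w i) (w i.+1)) -> (forall i, w i.+2 != w i) ->
  exists s : seq T, [/\ (3 <= size s)%N, uniq s & cycle e s].
Proof.
move=> eirr we w2.
pose repeats j := [exists i : 'I_j, w i == w j].
have [j [/existsP [i0 /eqP w_i0j] j_min]] :
    exists j, repeats j /\ forall j', repeats j' -> (j <= j')%N.
  have [|j Hj jmin] := ex_minnP (P := repeats); last by exists j.
  have : ~~ uniq (map w (iota 0 #|T|.+1)).
    apply/negP => /card_uniqP; rewrite size_map size_iota => cardw.
    by have := max_card (mem (map w (iota 0 #|T|.+1))); rewrite cardw ltnn.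
  case/(uniqPn (w 0)) => [i [j [ij]]]; rewrite size_map size_iota => jT.
  rewrite !(nth_map 0) ?size_iota ?(ltn_trans ij) // !nth_iota ?(ltn_trans ij) // !add0n.
  by move=> wij; exists j; apply/existsP; exists (Ordinal ij); rewrite wij.
have w_inj a b : (a < j)%N -> (b < j)%N -> w a = w b -> a = b.
  move=> aj bj wab; apply/eqP; apply/negPn/negP; rewrite neq_ltn => /orP [] lt.
  - suff : (j <= b)%N by rewrite leqNgt bj.
    by apply: j_min; apply/existsP; exists (Ordinal lt); rewrite /= wab.
  - suff : (j <= a)%N by rewrite leqNgt aj.
    by apply: j_min; apply/existsP; exists (Ordinal lt); rewrite /= wab.
have i0j : (i0 < j)%N := ltn_ord i0.
exists (map w (iota i0 (j - i0))); split.
- rewrite size_map size_iota.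
  have : (j - i0 != 1)%N.
    by apply/eqP => E; move: (we i0); rewrite (_ : i0.+1 = j) ?w_i0j ?eirr //; lia.
  have : (j - i0 != 2)%N.
    by apply/eqP => E; move: (w2 i0); rewrite (_ : i0.+2 = j) ?w_i0j ?eqxx //; lia.
  lia.
- rewrite map_inj_in_uniq ?iota_uniq // => a b.
  rewrite !mem_iota => /andP [_ aj] /andP [_ bj]; apply: w_inj; lia.
- rewrite (_ : (j - i0 = (j - i0.+1).+1)%N) /=; last by lia.
  rewrite (_ : rcons _ _ = map w (iota i0.+1 (j - i0.+1).+1)); first exact: walk_path.
  rewrite -cats1 -[(j - i0.+1).+1]addn1 iotaD map_cat /= w_i0j; congr (_ ++ [:: w _]); lia.
Qed.

(* Every nonempty vertex set U of a forest contains a vertex having at most one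
   neighbour in U; otherwise one could walk in U forever without backtracking. *)
Lemma forest_leaf (n : nat) (e : rel 'I_n) (U : {set 'I_n}) :
  (forall x, e x x = false) -> acyclic e -> U != set0 ->
  exists2 l, l \in U & forall x y, x \in U -> y \in U -> e l x -> e l y -> x = y.
Proof.
move=> eirr eac /set0Pn [x0 x0U].
pose two_nbrs l := [exists a in U, exists b in U, [&& e l a, e l b & a != b]].
case: (boolP [exists l in U, ~~ two_nbrs l]) => [|all_two].
  case/exists_inP=> l lU /exists_inPn l_leaf; exists l => // x y xU yU elx ely.
  by apply/eqP/negPn/negP => xy; have /exists_inPn/(_ y yU) := l_leaf x xU; rewrite elx ely xy.
have two l : l \in U -> two_nbrs l.
  by move=> lU; apply: contraNT all_two => ?; apply/exists_inP; exists l.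
pose next x y := odflt x [pick z in U | e x z && (z != y)].
have next_ok x y : x \in U -> [/\ next x y \in U, e x (next x y) & next x y != y].
  move=> xU; rewrite /next; case: pickP => [z /andP [zU /andP [exz zy]]|none] //=.
  have /exists_inP [a aU /exists_inP [b bU /and3P [exa exb ab]]] := two x xU.
  have := none a; have := none b; rewrite aU bU exa exb /= => /negbFE/eqP bE /negbFE/eqP aE.
  by move: ab; rewrite aE bE eqxx.
pose fix step i : 'I_n * 'I_n :=
  if i is i'.+1 then ((step i').2, next (step i').2 (step i').1) else (x0, next x0 x0).
have step_ok i : [/\ (step i).1 \in U, (step i).2 \in U & e (step i).1 (step i).2].
  elim: i => [|i [_ H2 _]] /=; first by have [] := next_ok x0 x0 x0U.
  by have [] := next_ok _ (step i).1 H2.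
exfalso; apply: eac; apply: (nonbacktracking_walk_cycle (w := fun i => (step i).1)) => // i.
  by case: (step_ok i).
by rewrite /=; case: (step_ok i) => _ H2 _; case: (next_ok _ (step i).1 H2).
Qed.

Section Counting.
Variable T : finType.
Implicit Types A B D S X Y : {set T}.

Lemma subset_of_card D k : (k <= #|D|)%N -> exists2 X : {set T}, X \subset D & #|X| = k.
Proof.
case/card_geqP=> s [us <- sD]; exists [set x in s]; last by rewrite cardsE (card_uniqP us).
by apply/subsetP => x; rewrite inE => /sD.
Qed.

Lemma subset_between A B t : A \subset B -> (#|A| <= t <= #|B|)%N ->
  exists S : {set T}, [/\ A \subset S, S \subset B & #|S| = t].
Proof.
move=> AB /andP [At tB].
have [|X XBA cardX] := @subset_of_card (B :\: A) (t - #|A|).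
  by rewrite cardsD (setIidPr AB); lia.
have AX : [disjoint A & X].
  by rewrite disjoint_sym disjoints_subset (subset_trans XBA) // setDE subsetIr.
exists (A :|: X); split; first exact: subsetUl.
  by rewrite subUset AB (subset_trans XBA) ?subsetDl.
by rewrite cardsU (disjoint_setI0 AX) cards0 cardX; lia.
Qed.

(* Given Y \subset X, some t-set S enlarges both X and Y as much as t allows:
   fill the complement of X first, then that of Y, then anything. *)
Lemma simultaneous_extension X Y t : Y \subset X -> (t <= #|T|)%N ->
  exists S : {set T}, [/\ #|S| = t, (minn #|T| (#|X| + t) <= #|S :|: X|)%N
                         & (minn #|T| (#|Y| + t) <= #|S :|: Y|)%N].
Proof.
move=> YX tT.
have cXY : (#|~: X| <= #|~: Y|)%N by rewrite subset_leq_card ?setCS.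
have cX := cardsC X; have cY := cardsC Y.
have full Z S : ~: Z \subset S -> #|S :|: Z| = #|T|.
  move=> ZS; suff -> : S :|: Z = [set: T] by rewrite cardsT.
  apply/setP => x; rewrite !inE.
  by case: (boolP (x \in Z)) => xZ; rewrite ?orbT // orbF (subsetP ZS) ?inE.
have disjU Z S : S \subset ~: Z -> #|S :|: Z| = (#|S| + #|Z|)%N.
  by move=> SZ; rewrite cardsU disjoint_setI0 ?cards0 ?subn0 // disjoints_subset.
case: (leqP t #|~: X|) => tX.
  have [|S [_ SX St]] := @subset_between set0 (~: X) t (sub0set _); first by rewrite cards0.
  exists S; split => //; rewrite disjU ?St; try lia.
  by apply: subset_trans SX _; rewrite setCS.
case: (leqP t #|~: Y|) => tY.
  have [||S [XS SY St]] := @subset_between (~: X) (~: Y) t; rewrite ?setCS //; first lia.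
  exists S; split => //; first by rewrite full //; lia.
  by rewrite disjU // St; lia.
have [|S [YS _ St]] := @subset_between (~: Y) [set: T] t (subsetT _).
  by rewrite cardsT; lia.
exists S; split => //; rewrite !full //; try lia.
by apply: subset_trans YS; rewrite setCS.
Qed.
End Counting.

Definition closed_nbhd (n : nat) (e : rel 'I_n) (v : 'I_n) : {set 'I_n} :=
  [set u | (u == v) || e v u].

Section Colouring.
Variables (n k : nat) (e : rel 'I_n) (u : 'I_n -> nat).
Hypothesis esym : forall x y, e x y = e y x.
Hypothesis eirr : forall x, e x x = false.
Hypothesis eac : acyclic e.
Implicit Types (U : {set 'I_n}) (r : 'I_n -> nat) (l p v : 'I_n).
Implicit Types (S : {set 'I_k}) (C : 'I_n -> {set 'I_k}).

Local Notation N := (closed_nbhd e).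

Definition feasible U r :=
  (forall v, r v <= k)%N /\ forall v, v \in U -> (r v <= \sum_(j in U :&: N v) u j)%N.

Definition colouring U r (C : 'I_n -> {set 'I_k}) :=
  (forall j, j \in U -> #|C j| = minn (u j) k) /\
  forall v, v \in U -> (r v <= #|\bigcup_(j in U :&: N v) C j|)%N.

Definition recolour l (S : {set 'I_k}) (C : 'I_n -> {set 'I_k}) j :=
  if j == l then S else C j.

Lemma nbhd_setD1 U l v : v != l -> ~~ e v l -> (U :\ l) :&: N v = U :&: N v.
Proof.
move=> vl vnl; apply/setP => j; rewrite !inE; case: (eqVneq j l) => [->|] //=.
by rewrite eq_sym (negbTE vl) (negbTE vnl) andbF.
Qed.

Lemma recolour_union U l S C v :
  \bigcup_(j in (U :\ l) :&: N v) C j \subset \bigcup_(j in U :&: N v) recolour l S C j.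
Proof.
apply/bigcupsP => j; rewrite !inE => /andP [/andP [jl jU] jv].
rewrite -[C j]/(if false then S else C j) -(negbTE jl).
by apply: (bigcup_sup j); rewrite !inE jU.
Qed.

Lemma recolour_sizes U r l S C : #|S| = minn (u l) k -> colouring (U :\ l) r C ->
  forall j, j \in U -> #|recolour l S C j| = minn (u j) k.
Proof.
move=> Scard [Ccard _] j jU; rewrite /recolour; case: eqP => [->|/eqP jl] //.
by apply: Ccard; rewrite !inE jl jU.
Qed.

Lemma recolour_covers U r l S C : colouring (U :\ l) r C ->
  forall v, v \in U -> v != l -> ~~ e v l ->
  (r v <= #|\bigcup_(j in U :&: N v) recolour l S C j|)%N.
Proof.
move=> [_ Ccov] v vU vl vnl.
apply: leq_trans _ (subset_leq_card (recolour_union _ _ S _ _)).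
by apply: Ccov; rewrite !inE vl vU.
Qed.

Lemma recolour_sup_self U l S C v : l \in U :&: N v ->
  S \subset \bigcup_(j in U :&: N v) recolour l S C j.
Proof. by move=> lN; apply: (subset_trans _ (bigcup_sup l lN)); rewrite /recolour eqxx. Qed.

Lemma recolour_sup_other U l S C v j : j != l -> j \in U :&: N v ->
  C j \subset \bigcup_(i in U :&: N v) recolour l S C i.
Proof.
by move=> jl jN; apply: (subset_trans _ (bigcup_sup j jN)); rewrite /recolour (negbTE jl).
Qed.

Section Step.
Variables (U : {set 'I_n}) (l : 'I_n).
Hypothesis lU : l \in U.
Hypothesis IH : forall r, feasible (U :\ l) r -> exists C, colouring (U :\ l) r C.

(* A vertex with no neighbour in U gets any min(u l, k) colours. *)
Lemma colour_isolated r : (forall j, j \in U -> ~~ e l j) -> feasible U r ->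
  exists C, colouring U r C.
Proof.
move=> l_iso [r_le r_sum].
have nadj v : v \in U -> ~~ e v l by move=> vU; rewrite esym l_iso.
have [|C CU] := IH (r := r).
  by split=> // v /setD1P [vl vU]; rewrite nbhd_setD1 ?nadj //; apply: r_sum.
have [|S _ Scard] := @subset_of_card _ [set: 'I_k] (minn (u l) k).
  by rewrite cardsT card_ord geq_minr.
exists (recolour l S C); split; first exact: recolour_sizes CU.
move=> v vU; case: (eqVneq v l) => [->|vl].
  2: by have := recolour_covers S CU vU vl (nadj v vU).
have Nl : U :&: N l = [set l].
  apply/setP => j; rewrite !inE; case: (eqVneq j l) => [->|jl]; rewrite ?lU //=.
  by case: (boolP (j \in U)) => // /l_iso /negbTE.
have r_l : (r l <= u l)%N by have := r_sum l lU; rewrite Nl big_set1.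
have lN : l \in U :&: N l by rewrite Nl set11.
apply: leq_trans _ (subset_leq_card (recolour_sup_self S C lN)).
by rewrite Scard; have := r_le l; lia.
Qed.

(* If p is the only neighbour of l in U, colour U minus l with the demand of p
   lowered by t = min(u l, k), then give l a t-set of colours adding as many new
   colours as possible both to N[p] and to N[l] = {l, p}. *)
Lemma colour_pendant r p : p \in U -> e l p -> (forall x, x \in U -> e l x -> x = p) ->
  feasible U r -> exists C, colouring U r C.
Proof.
move=> pU lp l_leaf [r_le r_sum].
have pl : p != l by apply: contraTneq lp => ->; rewrite eirr.
have nadj v : v \in U -> v != p -> ~~ e v l.
  by move=> vU; apply: contra; rewrite esym => /(l_leaf v vU) ->.
set t := minn (u l) k.
have sum_p : (\sum_(j in U :&: N p) u j = u l + \sum_(j in (U :\ l) :&: N p) u j)%N.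
  rewrite (_ : U :&: N p = l |: ((U :\ l) :&: N p)) ?big_setU1 ?inE ?eqxx //.
  apply/setP => j; rewrite !inE; case: (eqVneq j l) => [->|] //=.
  by rewrite lU esym lp orbT.
pose r' v := if v == p then r v - t else r v.
have [|C CU] := IH (r := r').
  split=> [v|v /setD1P [vl vU]]; rewrite /r'.
    by case: eqP => _; [apply: leq_trans (leq_subr _ _) _|]; apply: r_le.
  case: eqP => [->|/eqP vp]; last by rewrite nbhd_setD1 ?nadj //; apply: r_sum.
  by have := r_sum p pU; have := r_le p; rewrite sum_p; lia.
have [Ccard Ccov] := CU.
set X := \bigcup_(j in (U :\ l) :&: N p) C j.
have CpX : C p \subset X by apply: bigcup_sup; rewrite !inE pl pU eqxx.
have [|S [Scard SX SCp]] := simultaneous_extension CpX (t := t).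
  by rewrite card_ord geq_minr.
rewrite card_ord in SX SCp.
exists (recolour l S C); split; first exact: recolour_sizes CU.
move=> v vU; case: (eqVneq v l) => [->|vl].
  have Nl : U :&: N l = [set l; p].
    apply/setP => j; rewrite !inE; case: (eqVneq j l) => [->|jl] /=; first by rewrite lU.
    by apply/andP/eqP => [[jU lj]|->]; [apply: l_leaf | rewrite pU lp].
  have r_l : (r l <= u l + u p)%N.
    by have := r_sum l lU; rewrite Nl big_setU1 ?big_set1 // inE eq_sym.
  have : S :|: C p \subset \bigcup_(j in U :&: N l) recolour l S C j.
    by rewrite subUset recolour_sup_self ?recolour_sup_other // Nl !inE eqxx ?orbT.
  move/subset_leq_card; move: SCp; rewrite Ccard ?inE ?pl //; have := r_le l; lia.
case: (eqVneq v p) => [->|vp]; last first.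
  by have := recolour_covers S CU vU vl (nadj v vU vp); rewrite /r' (negbTE vp).
have X_r : (r p - t <= #|X|)%N by have := Ccov p; rewrite !inE pl pU /r' eqxx; apply.
have : S :|: X \subset \bigcup_(j in U :&: N p) recolour l S C j.
  by rewrite subUset recolour_sup_self ?recolour_union // !inE lU esym lp orbT.
by move/subset_leq_card; have := r_le p; lia.
Qed.
End Step.

(* The colouring lemma: on a forest every feasible demand can be met; induct on
   #|U|, removing a vertex with at most one neighbour in U. *)
Lemma forest_colouring U r : feasible U r -> exists C, colouring U r C.
Proof.
move: {2}#|U| (erefl #|U|) => m; elim: m U r => [|m IH] U r cardU feas.
  by exists (fun _ => set0); split=> v; rewrite (cards0_eq cardU) inE.
have [|l lU l_leaf] := forest_leaf (U := U) eirr eac.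
  by apply/eqP => U0; rewrite U0 cards0 in cardU.
have IHl r' : feasible (U :\ l) r' -> exists C, colouring (U :\ l) r' C.
  by apply: IH; move: cardU; rewrite (cardsD1 l) lU => -[].
case: (pickP [pred p in U | e l p]) => [p /andP [pU lp] | no_nbr].
  by apply: (colour_pendant lU IHl pU lp) => // x xU lx; apply: l_leaf.
by apply: (colour_isolated lU IHl) => // j jU; have := no_nbr j; rewrite /= jU => /= ->.
Qed.
End Colouring.

Local Open Scope ring_scope.

Section Ideals.
Variable R : comNzRingType.
Implicit Types (G Z : R -> Prop).

Lemma ideal_sum Z (I : eqType) (r : seq I) (F : I -> R) :
  is_ideal Z -> (forall i, i \in r -> Z (F i)) -> Z (\sum_(i <- r) F i).
Proof.
case=> Z0 ZD _; elim: r => [|a r IH] ZF; first by rewrite big_nil.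
rewrite big_cons; apply: ZD; first by apply/ZF/mem_head.
by apply: IH => i ir; apply: ZF; rewrite inE ir orbT.
Qed.

Lemma ideal_genP G f : ideal_gen G f ->
  exists gs cs : seq R, [/\ size cs = size gs, (forall g, g \in gs -> G g) &
    f = \sum_(i < size gs) cs`_i * gs`_i].
Proof.
move=> [gs [cs [Ggs ->]]]; exists gs, (mkseq (nth 0 cs) (size gs)).
by split; rewrite ?size_mkseq //; apply: eq_bigr => i _; rewrite nth_mkseq.
Qed.

Lemma ideal_gen_is_ideal G : is_ideal (ideal_gen G).
Proof.
split.
- by exists [::], [::]; rewrite big_ord0.
- move=> a b /ideal_genP [gs [cs [cgs Ggs ->]]] /ideal_genP [gs' [cs' [cgs' Ggs' ->]]].
  exists (gs ++ gs'), (cs ++ cs'); split.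
    by move=> g; rewrite mem_cat => /orP [/Ggs|/Ggs'].
  rewrite size_cat big_split_ord /=; congr (_ + _); apply: eq_bigr => i _.
    by rewrite !nth_cat cgs ltn_ord.
  by rewrite !nth_cat cgs ltnNge leq_addr /= addKn.
- move=> r a [gs [cs [Ggs ->]]]; exists gs, (map ( *%R r) cs); split => //.
  rewrite mulr_sumr; apply: eq_bigr => i _; case: (ltnP i (size cs)) => ics.
    by rewrite (nth_map 0) // mulrA.
  by rewrite (nth_default _ ics) (@nth_default _ 0 (map _ cs)) ?size_map // !mul0r mulr0.
Qed.

Lemma ideal_gen_sub G g : G g -> ideal_gen G g.
Proof.
by move=> Gg; exists [:: g], [:: 1]; rewrite big_ord1 mul1r; split=> // x /[!inE] /eqP ->.
Qed.

Lemma ideal_gen_min G Z f : is_ideal Z -> (forall g, G g -> Z g) -> ideal_gen G f -> Z f.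
Proof.
move=> Zid GZ [gs [cs [Ggs ->]]]; have [_ _ ZM] := Zid; rewrite -big_enum /=.
by apply: ideal_sum => // i _; apply/ZM/GZ/Ggs/mem_nth.
Qed.

Lemma ideal_pow_is_ideal (I : R -> Prop) k : is_ideal (ideal_pow I k).
Proof. exact: ideal_gen_is_ideal. Qed.

Lemma ideal_pow_prod (I : R -> Prop) (gs : seq R) :
  (forall x, x \in gs -> I x) -> ideal_pow I (size gs) (\prod_(x <- gs) x).
Proof. by move=> gsI; apply: ideal_gen_sub; exists gs. Qed.

Lemma prime_ideal_exp (P : R -> Prop) x k : prime_ideal P -> P (x ^+ k) -> P x.
Proof.
case=> _ P1 Pmul; elim: k => [|k IH]; first by rewrite expr0.
by rewrite exprS => /Pmul [].
Qed.
End Ideals.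

Section ADegree.
Variables (R : idomainType) (n : nat).
Implicit Types (p q : {mpoly R[n]}) (A B : {set 'I_n}) (m : 'X_{1..n}).

Definition adeg A m : nat := \sum_(j in A) m j.

(* Every monomial of p has A-degree at least k, i.e. p lies in the k-th power of
   the monomial prime generated by the variables of A. *)
Definition adeg_ge A k p := forall m, m \in msupp p -> (k <= adeg A m)%N.

Lemma adegD A m1 m2 : adeg A (m1 + m2)%MM = (adeg A m1 + adeg A m2)%N.
Proof. by rewrite /adeg -big_split; apply: eq_bigr => j _; rewrite mnmDE. Qed.

Lemma adeg_subset A B m : A \subset B -> (adeg A m <= adeg B m)%N.
Proof.
move=> AB; rewrite /adeg [X in (_ <= X)%N](bigID (mem A)) /=.
have -> : (\sum_(j in B | j \in A) m j = \sum_(j in A) m j)%N.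
  by apply: eq_bigl => j; case: (boolP (j \in A)) => [/(subsetP AB) ->|_]; rewrite ?andbF.
exact: leq_addr.
Qed.

Lemma leq_adeg A m j : j \in A -> (m j <= adeg A m)%N.
Proof. by move=> jA; rewrite /adeg (bigD1 j) //= leq_addr. Qed.

Lemma adeg_ge_mul A a b p q : adeg_ge A a p -> adeg_ge A b q -> adeg_ge A (a + b) (p * q).
Proof.
move=> pa qb m /msuppM_le /allpairsP [[m1 m2] /= [m1p m2q ->]].
by rewrite adegD leq_add ?pa ?qb.
Qed.

Lemma adeg_ge_mulr A k p q : adeg_ge A k p -> adeg_ge A k (p * q).
Proof. by move=> pk; rewrite -[k]addn0; apply: adeg_ge_mul. Qed.

Lemma adeg_ge_mull A k p q : adeg_ge A k q -> adeg_ge A k (p * q).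
Proof. by move=> qk; rewrite mulrC; apply: adeg_ge_mulr. Qed.

Lemma adeg_ge_ideal A k : is_ideal (adeg_ge A k).
Proof.
split=> [m|a b ak bk m|r a ak]; rewrite ?msupp0 //; last exact: adeg_ge_mull.
by move/msuppD_le; rewrite mem_cat => /orP [/ak|/bk].
Qed.

Lemma adeg_ge_subset A B k p : A \subset B -> adeg_ge A k p -> adeg_ge B k p.
Proof. by move=> AB pk m /pk; move/leq_trans; apply; apply: adeg_subset. Qed.

Lemma adeg_ge_le A k k' p : (k' <= k)%N -> adeg_ge A k p -> adeg_ge A k' p.
Proof. by move=> k'k pk m /pk; apply: leq_trans. Qed.

Lemma adeg_ge1_sub (Z : {mpoly R[n]} -> Prop) A p :
  is_ideal Z -> (forall j, j \in A -> Z 'X_j) -> adeg_ge A 1 p -> Z p.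
Proof.
move=> Zid ZX p1; have [_ _ ZM] := Zid; rewrite [p]mpolyE; apply: ideal_sum => // m mp.
have := p1 m mp; rewrite /adeg lt0n sum_nat_eq0 => /forallPn [j].
rewrite negb_imply => /andP [jA mj].
have jm : (U_(j) <= m)%MM.
  by apply/mnm_lepP => i; rewrite mnm1E; case: eqP => [<-|]; rewrite ?lt0n.
by rewrite -(submK jm) mpolyXD -mul_mpolyC mulrA; apply/ZM/ZX.
Qed.

Lemma mcoeff_sum_filter (s : seq 'X_{1..n}) (P : pred 'X_{1..n}) (c : 'X_{1..n} -> R) m :
  uniq s -> (\sum_(m' <- s | P m') c m' *: 'X_[m'] : {mpoly R[n]})@_m
            = if (m \in s) && P m then c m else 0.
Proof.
elim: s => [|a s IH] /=; first by rewrite big_nil mcoeff0.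
case/andP=> aNs us; rewrite big_cons inE; move: aNs; case: (eqVneq a m) => [->|am] aNs /=.
  by case: (P m); rewrite ?mcoeffD ?mcoeffZ ?mcoeffX ?eqxx ?mulr1 IH // (negbTE aNs) ?addr0.
by case: (P a); rewrite ?mcoeffD ?mcoeffZ ?mcoeffX ?(negbTE am) ?mulr0 ?add0r IH.
Qed.

Definition adeg_part A p d : {mpoly R[n]} :=
  \sum_(m <- msupp p | adeg A m == d) p@_m *: 'X_[m].

Lemma mcoeff_adeg_part A p d m : (adeg_part A p d)@_m = if adeg A m == d then p@_m else 0.
Proof.
rewrite mcoeff_sum_filter ?msupp_uniq //.
by case: (boolP (m \in msupp p)) => //= mp; rewrite memN_msupp_eq0 //; case: ifP.
Qed.

Lemma msupp_adeg_part A p d m : m \in msupp (adeg_part A p d) -> adeg A m = d.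
Proof.
by rewrite mcoeff_msupp mcoeff_adeg_part; case: (eqVneq (adeg A m) d) => // _; rewrite eqxx.
Qed.

Lemma lowest_adeg_part A p : p != 0 -> exists d,
  [/\ adeg_ge A d p, adeg_part A p d != 0 & adeg_ge A d.+1 (p - adeg_part A p d)].
Proof.
move=> p0; pose has_deg d := has (fun m => adeg A m == d) (msupp p).
have [|d dp dmin] := ex_minnP (P := has_deg).
  case E: (msupp p) => [|m s]; first by move: p0; rewrite -msupp_eq0 E.
  by exists (adeg A m); apply/hasP; exists m; rewrite ?E ?mem_head.
have pd : adeg_ge A d p by move=> m mp; apply: dmin; apply/hasP; exists m.
have [m0 m0p /eqP m0d] := hasP dp.
exists d; split=> //.
- apply/eqP => /mpolyP /(_ m0); rewrite mcoeff_adeg_part m0d eqxx mcoeff0 => /eqP.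
  by apply/negP; rewrite -mcoeff_msupp.
- move=> m; rewrite mcoeff_msupp mcoeffB mcoeff_adeg_part.
  case: (eqVneq (adeg A m) d) => [_|md]; first by rewrite subrr eqxx.
  by rewrite subr0 -mcoeff_msupp => /pd; rewrite leq_eqVlt eq_sym (negbTE md).
Qed.

(* The A-order min {adeg A m | m in msupp p} is a valuation: it is additive on
   products of an integral domain.  Only the needed inequality is stated. *)
Lemma adeg_ge_mul_lt A a b p q :
  ~ adeg_ge A a.+1 p -> ~ adeg_ge A b.+1 q -> ~ adeg_ge A (a + b).+1 (p * q).
Proof.
move=> pa qb.
have nonzero r k : ~ adeg_ge A k r -> r != 0.
  by move=> rk; apply/eqP => r0; apply: rk => m; rewrite r0 msupp0.
have [dp [pdp lp0 hp]] := lowest_adeg_part A (nonzero _ _ pa).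
have [dq [qdq lq0 hq]] := lowest_adeg_part A (nonzero _ _ qb).
have dpa : (dp <= a)%N by rewrite leqNgt; apply/negP => ap; apply/pa/(adeg_ge_le ap pdp).
have dqb : (dq <= b)%N by rewrite leqNgt; apply/negP => bq; apply/qb/(adeg_ge_le bq qdq).
set lp := adeg_part A p dp in lp0 hp; set lq := adeg_part A q dq in lq0 hq.
have homog_lp : adeg_ge A dp lp by move=> m /msupp_adeg_part ->.
have [m mpq] : exists m, m \in msupp (lp * lq).
  case E: (msupp (lp * lq)) => [|m s]; last by exists m; rewrite mem_head.
  by move: (mulf_neq0 lp0 lq0); rewrite -msupp_eq0 E.
have m_deg : adeg A m = (dp + dq)%N.
  move/msuppM_le/allpairsP: mpq => [[m1 m2] /= [/msupp_adeg_part d1 /msupp_adeg_part d2 ->]].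
  by rewrite adegD d1 d2.
have rest : adeg_ge A (dp + dq).+1 (p * q - lp * lq).
  have -> : p * q - lp * lq = lp * (q - lq) + (p - lp) * q by ring.
  have [_ addI _] := adeg_ge_ideal A (dp + dq).+1; apply: addI.
    by rewrite -addnS; apply: adeg_ge_mul.
  by rewrite -addSn; apply: adeg_ge_mul.
have rest_m : (p * q - lp * lq)@_m = 0.
  by apply: memN_msupp_eq0; apply/negP => /rest; rewrite m_deg ltnn.
move=> pqab; have : m \in msupp (p * q).
  by move: mpq; rewrite !mcoeff_msupp -(subrK (lp * lq) (p * q)) mcoeffD rest_m add0r.
by move/pqab; rewrite m_deg; lia.
Qed.
End ADegree.

Section DominatingPowers.
Variables (K : fieldType) (n : nat) (e : rel 'I_n).
Implicit Types (g : {mpoly K[n]}) (S : {set 'I_n}) (m : 'X_{1..n}).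
Local Notation N := (closed_nbhd e).
Local Notation DI := (@dominating_ideal K n e).

Definition mset S : 'X_{1..n} := (\sum_(i in S) U_(i))%MM.

Lemma msetE S j : mset S j = (j \in S).
Proof.
rewrite /mset mnm_sumE; under eq_bigr do rewrite mnm1E.
case: (boolP (j \in S)) => jS; last by rewrite big1 // => i iS; case: eqVneq jS => // <- /negP.
by rewrite (bigD1 j) //= eqxx big1 // => i /andP [_ /negbTE ->].
Qed.

Lemma prod_vars_mset S : \prod_(i in S) ('X_i : {mpoly K[n]}) = 'X_[mset S].
Proof. by rewrite mprodXE. Qed.

(* The k-th symbolic power of DI: the intersection over all v of the k-th powers
   of the primes generated by the variables of N[v]. *)
Definition symb_pow k g := forall v, adeg_ge (N v) k g.

Lemma symb_pow_ideal k : is_ideal (symb_pow k).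
Proof.
split=> [v|a b ak bk v|r a ak v]; have [I0 ID IM] := adeg_ge_ideal K (N v) k; auto.
Qed.

(* A dominating set meets every closed neighbourhood. *)
Lemma mindom_symb_pow1 S : minimal_dominating e S -> symb_pow 1 (\prod_(i in S) 'X_i).
Proof.
move=> /minsetp /forallP dom v; rewrite prod_vars_mset => m; rewrite msuppX inE => /eqP ->.
have /exists_inP [j jS jv] := dom v.
by apply: leq_trans (leq_adeg _ (_ : j \in N v)); rewrite ?msetE ?jS ?inE.
Qed.

Lemma DI_symb_pow1 g : DI g -> symb_pow 1 g.
Proof.
apply: ideal_gen_min; first exact: symb_pow_ideal.
by move=> h [S S_min ->]; apply: mindom_symb_pow1.
Qed.

Lemma symb_pow_prod k (gs : seq {mpoly K[n]}) : size gs = k ->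
  (forall x, x \in gs -> symb_pow 1 x) -> symb_pow k (\prod_(x <- gs) x).
Proof.
move=> <-; elim: gs => [|a gs IH] gs1 v; first by rewrite big_nil.
rewrite big_cons /= -add1n; apply: adeg_ge_mul; first exact/gs1/mem_head.
by apply: IH => x xgs; apply: gs1; rewrite inE xgs orbT.
Qed.

Lemma pow_sub_symb_pow k g : ideal_pow DI k g -> symb_pow k g.
Proof.
apply: ideal_gen_min; first exact: symb_pow_ideal.
by move=> h [gs [gsk gsDI ->]]; apply: symb_pow_prod => // x /gsDI /DI_symb_pow1.
Qed.

Hypothesis esym : forall x y, e x y = e y x.
Hypothesis eirr : forall x, e x x = false.
Hypothesis eac : acyclic e.

(* On a forest, a monomial of N[v]-degree at least k for every v lies in DI^k:
   the colouring lemma splits its exponent vector into k dominating sets. *)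
Lemma monomial_in_pow k m : (forall v, k <= adeg (N v) m)%N -> ideal_pow DI k 'X_[m].
Proof.
move=> mk.
have [|C [Ccard Ccov]] := @forest_colouring n k e m esym eirr eac [set: 'I_n] (fun=> k).
  by split=> // v _; rewrite setTI; apply: mk.
pose D i := [set j | i \in C j].
have domD i : dominating e (D i).
  apply/forallP => v.
  have : i \in \bigcup_(j in [set: 'I_n] :&: N v) C j.
    suff -> : \bigcup_(j in [set: 'I_n] :&: N v) C j = [set: 'I_k] by rewrite inE.
    by apply/eqP; rewrite eqEcard subsetT cardsT card_ord /= Ccov ?inE.
  by case/bigcupP => j; rewrite setTI inE => jv iCj; apply/exists_inP; exists j; rewrite ?inE.
pose M i := s2val (minset_exists (domD i)).
have MD i : M i \subset D i by rewrite /M; case: minset_exists.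
have Mmin i : minimal_dominating e (M i) by rewrite /M; case: minset_exists.
set s := (\sum_(i < k) mset (M i))%MM.
have sm : (s <= m)%MM.
  apply/mnm_lepP => j; rewrite /s mnm_sumE.
  apply: (@leq_trans (\sum_(i < k) (i \in C j))).
    apply: leq_sum => i _; rewrite msetE.
    by case: (boolP (j \in M i)) => // /(subsetP (MD i)); rewrite inE => ->.
  rewrite (eq_bigr (fun i => if i \in C j then 1 else 0)%N); last by move=> i _; case: (_ \in _).
  by rewrite -big_mkcond sum1_card Ccard ?inE // geq_minl.
rewrite -(submK sm) mpolyXD; have [_ _ powM] := ideal_pow_is_ideal DI k; apply: powM.
have := @ideal_pow_prod _ DI [seq \prod_(j in M i) 'X_j | i <- enum 'I_k].
rewrite size_map size_enum_ord big_map big_enum /= /s -mprodXE.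
under eq_bigr do rewrite prod_vars_mset.
by apply=> x /mapP [i _ ->]; apply: ideal_gen_sub; exists (M i).
Qed.

Lemma symb_pow_sub_pow k g : symb_pow k g -> ideal_pow DI k g.
Proof.
move=> gk; rewrite [g]mpolyE; apply: ideal_sum; first exact: ideal_pow_is_ideal.
move=> m mg; rewrite -mul_mpolyC; have [_ _ powM] := ideal_pow_is_ideal DI k.
by apply/powM/monomial_in_pow => v; apply: gk.
Qed.

Lemma symb_pow1_DI g : symb_pow 1 g -> DI g.
Proof.
move/symb_pow_sub_pow; apply: ideal_gen_min; first exact: ideal_gen_is_ideal.
by move=> h [[|x [|y gs]] [//= _ gsDI ->]]; rewrite big_seq1; apply/gsDI/mem_head.
Qed.
End DominatingPowers.

Section AssociatedPrimes.
Variables (K : fieldType) (n : nat) (e : rel 'I_n).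
Hypothesis esym : forall x y, e x y = e y x.
Hypothesis eirr : forall x, e x x = false.
Hypothesis eac : acyclic e.
Implicit Types (P : {mpoly K[n]} -> Prop) (g f : {mpoly K[n]}).
Local Notation N := (closed_nbhd e).
Local Notation DI := (@dominating_ideal K n e).

(* If every listed vertex has a variable of N[v] outside the prime P, some h not
   in P has N[v]-degree at least k for all listed v (a product of k-th powers). *)
Lemma multiplier_outside_prime P k (vs : seq 'I_n) : prime_ideal P ->
  (forall v, v \in vs -> exists2 j, j \in N v & ~ P 'X_j) ->
  exists h, ~ P h /\ forall v, v \in vs -> adeg_ge (N v) k h.
Proof.
move=> Pprime; have [_ P1 Pmul] := Pprime; elim: vs => [|v vs IH] vsP.
  by exists 1.
have [|h [Ph hk]] := IH; first by move=> w wvs; apply: vsP; rewrite inE wvs orbT.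
have [j jv Pj] := vsP v (mem_head _ _).
exists (h * 'X_j ^+ k); split.
  by case/Pmul => // /(prime_ideal_exp Pprime).
move=> w /predU1P [->|/hk wk]; last exact: adeg_ge_mulr.
apply: adeg_ge_mull; rewrite mpolyXn => m; rewrite msuppX inE => /eqP ->.
by apply: leq_trans (leq_adeg _ jv); rewrite mulmnE mnm1E eqxx mul1n.
Qed.

Lemma colon_prime_nbhd P k f : prime_ideal P ->
  (forall g, P g <-> symb_pow e k (g * f)) ->
  exists v, ~ adeg_ge (N v) k f /\ forall j, j \in N v -> P 'X_j.
Proof.
move=> Pprime Pf; apply: NNPP => none.
pose vs := [seq v <- enum 'I_n | ~~ all (fun m => k <= adeg (N v) m)%N (msupp f)].
have [|h [Ph hk]] := multiplier_outside_prime k (vs := vs) Pprime.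
  move=> v; rewrite mem_filter => /andP [/allPn [m mf mv] _].
  apply: NNPP => all_in; apply: none; exists v; split.
    by move/(_ m mf); rewrite (negbTE mv).
  by move=> j jv; apply: NNPP => Pj; apply: all_in; exists j.
apply/Ph/Pf => v; case: (boolP (v \in vs)) => [/hk/adeg_ge_mulr //|].
rewrite mem_filter mem_enum andbT negbK => /allP fk.
by apply: adeg_ge_mull => m /fk.
Qed.

Lemma ass_prime_pow k P : (1 <= k)%N -> associated_prime (ideal_pow DI k) P ->
  exists v, (forall g, P g <-> adeg_ge (N v) 1 g) /\
            (forall w, N w \subset N v -> N w = N v).
Proof.
move=> k1 [Pprime [f Pf]]; have [Pideal _ _] := Pprime.
have Pf' g : P g <-> symb_pow e k (g * f).
  by rewrite Pf; split; [apply: pow_sub_symb_pow | apply: symb_pow_sub_pow].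
have [v0 [f_v0 Pv0]] := colon_prime_nbhd Pprime Pf'.
case: (@arg_minnP _ v0 (fun w => N w \subset N v0) (fun w => #|N w|) (subxx _)) => v v_v0 vmin.
have f_v : ~ adeg_ge (N v) k.-1.+1 f by rewrite prednK // => /(adeg_ge_subset v_v0).
exists v; split=> [g|w wv]; last first.
  by apply/eqP; rewrite eqEcard wv vmin // (subset_trans wv v_v0).
split=> [Pg|]; last by apply: adeg_ge1_sub => // j /(subsetP v_v0) /Pv0.
apply: NNPP => g1; apply: (adeg_ge_mul_lt (a := 0) g1 f_v).
by rewrite add0n prednK //; move/Pf': Pg.
Qed.

(* Conversely, the monomial prime of an inclusion-minimal N[v] is associated to
   DI itself: it is the colon ideal (DI : product of the variables outside N[v]). *)
Lemma ass_prime_DI P v : prime_ideal P -> (forall g, P g <-> adeg_ge (N v) 1 g) ->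
  (forall w, N w \subset N v -> N w = N v) -> associated_prime DI P.
Proof.
move=> Pprime Pv vmin; split=> //; exists 'X_[mset (~: N v)] => g; rewrite Pv.
have outside : ~ adeg_ge (N v) 1 ('X_[mset (~: N v)] : {mpoly K[n]}).
  move/(_ (mset (~: N v))); rewrite msuppX mem_head => /(_ isT).
  by rewrite /adeg big1 // => j jv; rewrite msetE inE jv.
split=> [g1|/DI_symb_pow1/(_ v) gX]; last first.
  by apply: NNPP => g1; apply: (adeg_ge_mul_lt (a := 0) (b := 0) g1 outside).
apply: symb_pow1_DI => // w; case: (boolP (N w \subset N v)) => [/vmin ->|].
  exact: adeg_ge_mulr.
case/subsetPn => j jw jv; apply: adeg_ge_mull => m; rewrite msuppX inE => /eqP ->.
by apply: leq_trans (leq_adeg _ jw); rewrite msetE inE jv.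
Qed.
End AssociatedPrimes.

(* Dominating ideals of trees
   are normally torsion-free. *)
Theorem corollary2p19 (K : fieldType) (n : nat) (e : rel 'I_n) :
  is_tree e -> normally_torsion_free (@dominating_ideal K n e).
Proof.
case=> [[esym eirr] _ eac] k k1 P Pass.
have [v [Pv vmin]] := ass_prime_pow esym eirr eac k1 Pass.
exact (ass_prime_DI esym eirr eac (proj1 Pass) Pv vmin).
Qed.
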